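(* Let $\Lambda\subset\mathbb Z$ be a finite interval which is the union of three consecutive intervals $\Lambda_l,\Lambda_m,\Lambda_r$ (in this order), and put $\Lambda_1=\Lambda_l\cup\Lambda_m$, $\Lambda_2=\Lambda_m\cup\Lambda_r$. Let $\mathbf D_1\in\mathcal D_{\Lambda_1}$ and $\mathbf D_2\in\mathcal D_{\Lambda_2}$ be VMD tilings. Assume $|\Lambda_m|\ge6$ and that $\boldsymbol\sigma_{\Lambda_1}(\mathbf D_1)$ and $\boldsymbol\sigma_{\Lambda_2}(\mathbf D_2)$ agree on $\Lambda_m$. Then there is a unique VMD tiling $\mathbf D\in\mathcal D_\Lambda$ whose configuration $\boldsymbol\sigma_\Lambda(\mathbf D)$ restricted to $\Lambda_1$ equals $\boldsymbol\sigma_{\Lambda_1}(\mathbf D_1)$ and restricted to $\Lambda_2$ equals $\boldsymbol\sigma_{\Lambda_2}(\mathbf D_2)$.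
   Context: Tilings of a finite interval $\Lambda$: a tile occupies consecutive sites and carries a 0/1 word (its particle content): void $0$; monomer $100$; dimer $011000$; left boundary dimer $11000$ (allowed only as the first tile of $\Lambda$); and, allowed only as the last tile of $\Lambda$: right dimer $011$, right 1-monomer $1$, right 2-monomer $10$, truncated 1-dimer $0110$, truncated 2-dimer $01100$. A root tiling $R$ of $\Lambda$ is a tiling of $\Lambda$ by consecutive tiles consisting of voids and monomers, optionally with a left boundary dimer as first tile and optionally with one of right dimer, right 1-monomer, right 2-monomer as last tile; $\mathcal R_\Lambda$ denotes their set. A VMD tiling derived from $R$ is obtained by choosing a collection of disjoint pairs of consecutive tiles of $R$, each pair being either two monomers (replaced by a dimer) or a monomer followed by a right $j$-monomer, $j\in\{1,2\}$ (replaced by the truncated $j$-dimer); $\mathcal D_\Lambda(R)$ is the set of these and $\mathcal D_\Lambda=\bigcup_{R\in\mathcal R_\Lambda}\mathcal D_\Lambda(R)$. The configuration $\boldsymbol\sigma_\Lambda(\mathbf D)\in\{0,1\}^\Lambda$ of a tiling $\mathbf D$ is the concatenation of the particle contents of its tiles. *)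

From mathcomp Require Import all_boot.
Set Implicit Arguments. Unset Strict Implicit. Unset Printing Implicit Defensive.

Inductive tile :=
  | Void
  | Mono
  | Dimer
  | LDimer      (* 11000   : left boundary dimer, only first tile *)
  | RDimer      (* 011     : right dimer, only last tile *)
  | RMono1      (* 1       : right 1-monomer, only last tile *)
  | RMono2      (* 10      : right 2-monomer, only last tile *)
  | TDimer1     (* 0110    : truncated 1-dimer, only last tile *)
  | TDimer2.    (* 01100   : truncated 2-dimer, only last tile *)

(* particle content of a tile (true = 1, false = 0) *)
Definition word (t : tile) : seq bool :=
  match t with
  | Void => [:: false]
  | Mono => [:: true; false; false]
  | Dimer => [:: false; true; true; false; false; false]
  | LDimer => [:: true; true; false; false; false]
  | RDimer => [:: false; true; true]
  | RMono1 => [:: true]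
  | RMono2 => [:: true; false]
  | TDimer1 => [:: false; true; true; false]
  | TDimer2 => [:: false; true; true; false; false]
  end.

(* A tiling of an interval is the left-to-right list of its tiles;
   its configuration is the concatenation of the particle contents. *)
Definition config (D : seq tile) : seq bool := flatten (map word D).

Definition is_vm (t : tile) : bool :=
  match t with Void | Mono => true | _ => false end.

Definition is_right_root (t : tile) : bool :=
  match t with RDimer | RMono1 | RMono2 => true | _ => false end.

Definition root_tiling (n : nat) (R : seq tile) : Prop :=
  size (config R) = n /\
  exists (L M Rt : seq tile),
    R = L ++ M ++ Rt /\
    (L = [::] \/ L = [:: LDimer]) /\
    all is_vm M /\
    (Rt = [::] \/ exists t, Rt = [:: t] /\ is_right_root t).

Inductive derived : seq tile -> seq tile -> Prop :=
  | der_nil : derived [::] [::]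
  | der_keep t R D : derived R D -> derived (t :: R) (t :: D)
  | der_dimer R D : derived R D -> derived [:: Mono, Mono & R] (Dimer :: D)
  | der_trunc1 R D : derived R D -> derived [:: Mono, RMono1 & R] (TDimer1 :: D)
  | der_trunc2 R D : derived R D -> derived [:: Mono, RMono2 & R] (TDimer2 :: D).

Definition vmd_tiling (n : nat) (D : seq tile) : Prop :=
  exists R, root_tiling n R /\ derived R D.

(* The configurations of VMD tilings form a regular language, recognised by a
   14-state automaton, and a VMD tiling can be parsed back from its
   configuration.  The automaton synchronises after 6 letters: two runs that
   both stay alive through a word of length at least 6 end in the same state.
   So when config D1 is followed by the part of config D2 lying in Λ_r, the
   state reached at the end of Λ_m is the one reached when reading config D2
   from its start, and the whole word is accepted.  Injectivity of the
   configuration map gives uniqueness. *)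

From mathcomp Require Import all_boot zify.
Set Implicit Arguments. Unset Strict Implicit. Unset Printing Implicit Defensive.

Definition interior_tile (t : tile) : bool :=
  match t with Void | Mono | Dimer => true | _ => false end.

Fixpoint body_tiling (D : seq tile) : bool :=
  match D with
  | [::] => true
  | [:: t] => if t is LDimer then false else true
  | t :: D' => interior_tile t && body_tiling D'
  end.

Definition vmd_shape (D : seq tile) : bool :=
  if D is LDimer :: D' then body_tiling D' else body_tiling D.

Fixpoint vm_root (R : seq tile) : bool :=
  match R with
  | [::] => true
  | [:: t] => is_vm t || is_right_root t
  | t :: R' => is_vm t && vm_root R'
  end.

Lemma config_cons t D : config (t :: D) = word t ++ config D.
Proof. by []. Qed.

Lemma body_tiling_cons t D : interior_tile t -> body_tiling D -> body_tiling (t :: D).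
Proof. by case: t => //= _; case: D. Qed.

Lemma body_tiling_shape D : body_tiling D -> vmd_shape D.
Proof. by case: D => // [[]] // [|t D]. Qed.

Lemma derived_size_config R D : derived R D -> size (config R) = size (config D).
Proof. by elim=> // [t|||] R' D' _ IH; rewrite !config_cons !size_cat IH. Qed.

Lemma derived_nil D : derived [::] D -> D = [::].
Proof. by move=> RD; inversion RD. Qed.

Lemma derived_body_tiling R D : derived R D -> vm_root R -> body_tiling D.
Proof.
elim=> // [t|||] [|u R'] D' RD' IH; rewrite ?(derived_nil RD') //.
- by case: t.
- by case/andP=> vm_t /IH; apply: body_tiling_cons; case: t vm_t.
- by move/IH; apply: body_tiling_cons.
Qed.

Lemma body_tiling_derived D : body_tiling D -> exists2 R, vm_root R & derived R D.
Proof.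
elim: D => [_|t [|u D] IH]; first by exists [::]; last constructor.
- case: t => // _; [exists [:: Void] | exists [:: Mono] | exists [:: Mono; Mono]
    | exists [:: RDimer] | exists [:: RMono1] | exists [:: RMono2]
    | exists [:: Mono; RMono1] | exists [:: Mono; RMono2]]; by do 2 constructor.
- case/andP=> int_t /IH [[|v R] rootR RD]; first by inversion RD.
  case: t int_t => // _;
    [exists [:: Void, v & R] | exists [:: Mono, v & R] | exists [:: Mono, Mono, v & R]];
    by [| constructor].
Qed.

Lemma vm_rootP R : reflect (exists M Rt, [/\ R = M ++ Rt, all is_vm M &
    Rt = [::] \/ exists t, Rt = [:: t] /\ is_right_root t]) (vm_root R).
Proof.
apply: (iffP idP).
- elim: R => [_|t R IH]; first by exists [::], [::]; split; [|by []|left].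
  case: R IH => [_ /orP[vm_t|rr_t]|u R IH /andP[vm_t /IH [M [Rt [-> allM HRt]]]]].
  + by exists [:: t], [::]; rewrite /= vm_t; split; [|by []|left].
  + by exists [::], [:: t]; split; [|by []|right; exists t].
  + by exists (t :: M), Rt; rewrite /= vm_t.
- case=> M [Rt [-> allM HRt]]; elim: M allM => [_|t M IH /andP[vm_t /IH root_MRt]].
    by case: HRt => [->|[u [-> rr_u]]] //=; rewrite rr_u orbT.
  case: M root_MRt {IH} => [|u M] root_MRt /=; last by rewrite vm_t.
  by case: HRt root_MRt => [->|[v [-> rr_v]]] /=; rewrite vm_t.
Qed.

Lemma config_cat D D' : config (D ++ D') = config D ++ config D'.
Proof. by rewrite /config map_cat flatten_cat. Qed.

Lemma derived_LDimer R D :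
  derived (LDimer :: R) D -> exists2 D', D = LDimer :: D' & derived R D'.
Proof. by move=> RD; inversion RD; exists D0. Qed.

Lemma vmd_shape_split D : vmd_shape D ->
  exists L B, [/\ D = L ++ B, L = [::] \/ L = [:: LDimer] & body_tiling B].
Proof.
case: D => [|t B]; first by exists [::], [::]; split; [|left|].
case: t => shapeD; first [by exists [:: LDimer], B; split; [|right|]
                        | by exists [::]; eexists; split; [reflexivity|left|]].
Qed.

Lemma vmd_tilingP n D : vmd_tiling n D <-> vmd_shape D /\ size (config D) = n.
Proof.
split.
- case=> R [[sizeR [L [M [Rt [ER [HL [allM HRt]]]]]]] RD].
  rewrite -(derived_size_config RD); split=> //.
  have rootMRt : vm_root (M ++ Rt) by apply/vm_rootP; exists M, Rt.
  case: HL ER => -> /= ER; rewrite ER in RD.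
    exact/body_tiling_shape/(derived_body_tiling RD).
  by have [D' -> RD'] := derived_LDimer RD; apply: derived_body_tiling RD' _.
- case=> /vmd_shape_split [L [B [-> HL bodyB]]] <-.
  have [R rootR RD] := body_tiling_derived bodyB.
  have /vm_rootP [M [Rt [ER allM HRt]]] := rootR.
  exists (L ++ R); split; last by case: HL => ->; last constructor.
  split; first by rewrite !config_cat !size_cat (derived_size_config RD).
  by exists L, M, Rt; rewrite ER.
Qed.

(* State 0 is a dead sink and 1..10 are accepting.  1: start; 2: between two
   tiles; 3: after a 0 that is a void or begins a dimer-like tile; 4: after 01;
   5 and 10: after a 1 beginning a monomer (10 only at the left end, where 11
   begins the left boundary dimer); 6: after 10 inside a monomer; 7, 8, 9: after
   011, 0110, 01100; 11, 12, 13: inside the left boundary dimer 11000. *)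
Definition step (q : nat) (x : bool) : nat :=
  match q, x with
  | 1, false => 3 | 1, true => 10
  | 2, false => 3 | 2, true => 5
  | 3, false => 3 | 3, true => 4
  | 4, false => 6 | 4, true => 7
  | 5, false => 6
  | 6, false => 2
  | 7, false => 8
  | 8, false => 9
  | 9, false => 2
  | 10, false => 6 | 10, true => 11
  | 11, false => 12
  | 12, false => 13
  | 13, false => 2
  | _, _ => 0
  end.

Definition run (q : nat) (w : seq bool) : nat := foldl step q w.

Definition accepting (q : nat) : bool := 0 < q <= 10.

Definition tile_boundary (q : nat) : bool := q \in [:: 1; 2; 3].

Lemma run_dead w : run 0 w = 0.
Proof. by elim: w => [|[] w]. Qed.

Lemma run_cat q w w' : run q (w ++ w') = run (run q w) w'.
Proof. exact: foldl_cat. Qed.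

Lemma run_interior_tile q t :
  tile_boundary q -> interior_tile t -> tile_boundary (run q (word t)).
Proof. by rewrite /tile_boundary !inE => /or3P[] /eqP->; case: t. Qed.

Lemma run_last_tile q t : tile_boundary q -> t <> LDimer -> accepting (run q (word t)).
Proof. by rewrite /tile_boundary !inE => /or3P[] /eqP->; case: t. Qed.

Lemma body_tiling_accepting q D :
  tile_boundary q -> body_tiling D -> accepting (run q (config D)).
Proof.
elim: D q => [|t [|u D] IH] q bq.
- by move: bq; rewrite /tile_boundary !inE => /or3P[] /eqP->.
- by rewrite /config /= cats0 => last_t; apply: run_last_tile; case: t last_t.
- case/andP=> int_t bodyD; rewrite config_cons run_cat.
  by apply: IH => //; apply: run_interior_tile.
Qed.

Lemma vmd_shape_accepting D : vmd_shape D -> accepting (run 1 (config D)).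
Proof.
case: D => [|t D] //; case: t => shapeD; try exact: body_tiling_accepting.
by rewrite config_cons run_cat; apply: body_tiling_accepting.
Qed.

Lemma accepting_body_tiling w :
  accepting (run 2 w) -> exists2 D, body_tiling D & config D = w.
Proof.
have [n] := ubnP (size w); elim: n w => // n IH w lt_w_n.
have extend t w' : interior_tile t -> size (word t ++ w') <= size w ->
    accepting (run 2 w') -> exists2 D, body_tiling D & config D = word t ++ w'.
  move=> int_t le_tw'_w /IH[|D bodyD <-]; last by exists (t :: D); first exact: body_tiling_cons.
  by move: le_tw'_w lt_w_n; rewrite size_cat; case: t int_t => //= _; lia.
case: w {lt_w_n IH} extend => [|[] w] extend accw; first by exists [::].
- case: w accw extend => [|[] [|[] w]] accw extend; try by rewrite /= ?run_dead in accw.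
  + by exists [:: RMono1].
  + by exists [:: RMono2].
  + exact: (extend Mono).
- case: w accw extend => [|[] w] accw extend;
    [by exists [:: Void] | | exact: (extend Void (false :: w))].
  case: w accw extend => [|[] w] accw extend; first by exists [:: Void; RMono1].
  + case: w accw extend => [|[] [|[] [|[] w]]] accw extend;
      try by rewrite /= ?run_dead in accw.
    * by exists [:: RDimer].
    * by exists [:: TDimer1].
    * by exists [:: TDimer2].
    * exact: (extend Dimer).
  + case: w accw extend => [|[] w] accw extend; try by rewrite /= ?run_dead in accw.
    * by exists [:: Void; RMono2].
    * exact: (extend Void (word Mono ++ w)).
Qed.

Lemma accepting_vmd_shape w :
  accepting (run 1 w) -> exists2 D, vmd_shape D & config D = w.
Proof.
have body_shape w' : accepting (run 2 w') -> exists2 D, vmd_shape D & config D = w'.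
  by case/accepting_body_tiling=> D /body_tiling_shape; exists D.
case: w => [|[] w] accw; [by exists [::] | | exact: (body_shape (false :: w))].
case: w accw => [|[] w] accw; [by exists [:: RMono1] | | exact: (body_shape [:: true, false & w])].
case: w accw => [|[] [|[] [|[] w]]] accw; try by rewrite /= ?run_dead in accw.
by have [D bodyD <-] := accepting_body_tiling accw; exists (LDimer :: D).
Qed.

Fixpoint synchronizing (n : nat) (qs : seq nat) : bool :=
  if n is n'.+1 then synchronizing n' [seq step q true | q <- qs] &&
                     synchronizing n' [seq step q false | q <- qs]
  else let live := [seq q <- qs | q != 0] in all (pred1 (head 0 live)) live.

Lemma synchronizingP n qs : synchronizing n qs -> forall w q q', size w = n ->
  q \in qs -> q' \in qs -> run q w != 0 -> run q' w != 0 -> run q w = run q' w.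
Proof.
elim: n qs => [|n IH] qs /=.
  move=> sync_qs [|//] q q' _ qs_q qs_q' /= q_live q'_live.
  have head_live p : p \in qs -> p != 0 -> p = head 0 [seq q <- qs | q != 0].
    by move=> qs_p p_live; apply/eqP/(allP sync_qs); rewrite mem_filter p_live.
  by rewrite (head_live q) // (head_live q').
case/andP=> sync_t sync_f [|[] w] //= q q' [size_w] qs_q qs_q'.
  exact: (IH _ sync_t _ _ _ size_w (map_f _ qs_q) (map_f _ qs_q')).
exact: (IH _ sync_f _ _ _ size_w (map_f _ qs_q) (map_f _ qs_q')).
Qed.

Lemma synchronizing_states : synchronizing 6 (iota 0 14).
Proof. by vm_compute. Qed.

Lemma step_out_of_range p x : 13 < p -> step p x = 0.
Proof. by do 14 (case: p => [|p] //); case: x. Qed.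

Lemma run_sync w q q' : 6 <= size w ->
  run q w != 0 -> run q' w != 0 -> run q w = run q' w.
Proof.
move=> size_w; rewrite -(cat_take_drop (size w - 6) w) !run_cat.
have size_suffix : size (drop (size w - 6) w) = 6 by rewrite size_drop; lia.
move: (drop _ w) size_suffix (run q _) (run q' _) => s size_s p p'.
have state_range p'' : run p'' s != 0 -> p'' \in iota 0 14.
  case: s size_s => [|x s] // _; rewrite mem_iota -[x :: s]cat1s run_cat /=.
  by case: (ltnP 13 p'') => // /step_out_of_range ->; rewrite run_dead.
move=> live_p live_p'.
by apply: (synchronizingP synchronizing_states) => //; apply: state_range.
Qed.

Lemma accepting_overlap a b c : 6 <= size b ->
  accepting (run 1 (a ++ b)) -> accepting (run 1 (b ++ c)) ->
  accepting (run 1 (a ++ b ++ c)).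
Proof.
rewrite !run_cat => size_b acc_ab acc_bc.
have live_ab : run (run 1 a) b != 0 by case: (run _ b) acc_ab.
have live_b : run 1 b != 0 by apply: contraTneq acc_bc => ->; rewrite run_dead.
by rewrite (run_sync size_b live_ab live_b).
Qed.

Fixpoint parse_body (s : seq bool) : seq tile :=
  match s with
  | [::] => [::]
  | false :: s' =>
    match s' with
    | true :: true :: false :: false :: false :: s'' => Dimer :: parse_body s''
    | [:: true; true; false; false] => [:: TDimer2]
    | [:: true; true; false] => [:: TDimer1]
    | [:: true; true] => [:: RDimer]
    | _ => Void :: parse_body s'
    end
  | true :: s' =>
    match s' with
    | false :: false :: s'' => Mono :: parse_body s''
    | [:: false] => [:: RMono2]
    | [::] => [:: RMono1]
    | _ => [::]
    end
  end.

Definition parse (s : seq bool) : seq tile :=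
  if s is true :: true :: false :: false :: false :: s' then LDimer :: parse_body s'
  else parse_body s.

Lemma body_config_head t D : body_tiling (t :: D) ->
  [\/ config (t :: D) = [:: true], exists s, config (t :: D) = [:: true, false & s]
    | exists s, config (t :: D) = false :: s].
Proof.
case: D => [|u D]; case: t => //= _;
  by [apply: Or31 | apply: Or32; eexists | apply: Or33; eexists].
Qed.

Lemma parse_bodyK D : body_tiling D -> parse_body (config D) = D.
Proof.
elim: D => [|t [|u D] IH] //; first by case: t.
case/andP=> int_t body_uD; rewrite config_cons.
rewrite -[in RHS](IH body_uD); move: (body_config_head body_uD).
move: (config (u :: D)) => c.
by case: t int_t => // _ [-> | [s ->] | [s ->]].
Qed.

Lemma parseK D : vmd_shape D -> parse (config D) = D.
Proof.
case: D => [|t D] //; case: t => shapeD; try exact: parse_bodyK.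
- by rewrite config_cons /= parse_bodyK.
- by case: D shapeD.
Qed.

Lemma config_inj D D' : vmd_shape D -> vmd_shape D' -> config D = config D' -> D = D'.
Proof. by move=> /parseK {2}<- /parseK {2}<- ->. Qed.

Theorem lemma2p3 (l m r : nat) (D1 D2 : seq tile) :
  6 <= m ->
  vmd_tiling (l + m) D1 ->
  vmd_tiling (m + r) D2 ->
  drop l (config D1) = take m (config D2) ->
  exists! D : seq tile,
    vmd_tiling (l + m + r) D /\
    take (l + m) (config D) = config D1 /\
    drop l (config D) = config D2.
Proof.
move=> le6m /vmd_tilingP[shape1 size1] /vmd_tilingP[shape2 size2] overlap.
set a := take l (config D1); set b := drop l (config D1); set c := drop m (config D2).
have size_a : size a = l by rewrite size_takel // size1 leq_addr.
have size_b : size b = m by rewrite size_drop size1 addKn.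
have config1 : config D1 = a ++ b by rewrite cat_take_drop.
have config2 : config D2 = b ++ c by rewrite /b overlap cat_take_drop.
have [D shapeD configD] : exists2 D, vmd_shape D & config D = a ++ b ++ c.
  apply/accepting_vmd_shape/accepting_overlap; rewrite ?size_b // -?config1 -?config2;
  exact: vmd_shape_accepting.
exists D; split; [split; [|split] |].
- apply/vmd_tilingP; split=> //.
  by rewrite configD catA size_cat -config1 size1 size_drop size2 addKn.
- by rewrite configD catA take_size_cat -config1.
- by rewrite configD drop_size_cat.
- move=> D' [/vmd_tilingP[shape' _] [take' drop']]; apply: config_inj shapeD shape' _.
  rewrite configD -(cat_take_drop (l + m) (config D')) take'.
  by rewrite [l + m]addnC -drop_drop drop' config1 catA.
Qed.
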